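(* Let $\mathcal{T}$ be an almost linear iteration tree with tree order $T$, and let $\lambda\le\mathrm{lh}(\mathcal{T})$ be a limit ordinal (or $\lambda=\mathrm{OR}$). Then $\mathcal{T}\restriction\lambda$ has a unique cofinal branch $b$, and if $\lambda<\mathrm{lh}(\mathcal{T})$ then $b=[0,\lambda)_T$.
   Context: Iteration trees are as in inner model theory (Mitchell–Steel, ''Fine structure and iteration trees''): $T$ is the tree order on $\mathrm{lh}(\mathcal{T})$, $[0,\alpha)_T$ denotes the set of $T$-predecessors of $\alpha$, and $T\text{-pred}(i+1)$ is the immediate $T$-predecessor of $i+1$. An iteration tree $\mathcal{T}$ is almost linear if (a) for all $i+1<\mathrm{lh}(\mathcal{T})$ we have $T\text{-pred}(i+1)\in[0,i]_T$, and (b) every $i<\mathrm{lh}(\mathcal{T})$ has only finitely many immediate $T$-successors. A cofinal branch of $\mathcal{T}\restriction\lambda$ is a set $b\subseteq\lambda$ which is linearly ordered and downward closed under $T$ and unbounded in $\lambda$. *)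

(* Ordinals are modelled by an arbitrary well-ordered type
   (O, lt); initial segments of O (downward closed predicates) play the role
   of ordinals <= the order type of O, with the whole of O playing OR. *)
From Stdlib Require Import List.
Set Implicit Arguments.

Section Ord.
Variable O : Type.
Variable lt : O -> O -> Prop.

Definition le (x y : O) : Prop := lt x y \/ x = y.

Definition is_wellorder : Prop :=
  (forall x, ~ lt x x) /\
  (forall x y z, lt x y -> lt y z -> lt x z) /\
  (forall x y, lt x y \/ x = y \/ lt y x) /\
  well_founded lt.

Definition is_min (z : O) : Prop := forall x, le z x.
Definition is_succ (a b : O) : Prop := lt a b /\ forall x, lt a x -> le b x.
Definition is_limit (l : O) : Prop :=
  (exists x, lt x l) /\ forall x, lt x l -> exists y, lt x y /\ lt y l.

Definition downward_closed (S : O -> Prop) : Prop :=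
  forall x y, lt x y -> S y -> S x.
(* a limit initial segment: nonempty, with no largest element;
   these are exactly the limit ordinals and OR (= all of O) *)
Definition limit_segment (L : O -> Prop) : Prop :=
  downward_closed L /\ (exists x, L x) /\
  forall x, L x -> exists y, L y /\ lt x y.

Variable T : O -> O -> Prop.   (* tree order: T x y means x <_T y *)

Definition Tle (x y : O) : Prop := T x y \/ x = y.
Definition Tpred (p j : O) : Prop := T p j /\ forall x, T x j -> Tle x p.

(* T is the tree order of an iteration tree of length lh
   (Mitchell-Steel, Fine structure and iteration trees, Def. 5.1) *)
Definition iteration_tree_order (lh : O -> Prop) : Prop :=
  downward_closed lh /\
  (forall a b, T a b -> lh a /\ lh b) /\
  (forall a b, T a b -> lt a b) /\
  (forall a b c, T a b -> T b c -> T a c) /\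
  (forall a c b, T a b -> T c b -> a = c \/ T a c \/ T c a) /\
  (forall z b, is_min z -> lh b -> b <> z -> T z b) /\
  (forall a b, is_succ a b -> lh b -> exists p, Tpred p b) /\
  (* for limit l < lh, [0,l)_T is club in l *)
  (forall l, is_limit l -> lh l ->
     (forall x, lt x l -> exists y, lt x y /\ T y l) /\
     (forall g, lt g l -> is_limit g ->
        (forall x, lt x g -> exists y, lt x y /\ lt y g /\ T y l) -> T g l)).

Definition almost_linear (lh : O -> Prop) : Prop :=
  (forall i j p, is_succ i j -> lh j -> Tpred p j -> Tle p i) /\
  (forall i, lh i -> exists s : list O, forall j, Tpred i j -> In j s).

Definition cofinal_branch (L : O -> Prop) (b : O -> Prop) : Prop :=
  (forall x, b x -> L x) /\
  (forall x y, b x -> b y -> x = y \/ T x y \/ T y x) /\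
  (forall x y, b y -> T x y -> b x) /\
  (forall x, L x -> exists y, b y /\ le x y).

End Ord.

(* Almost linearity gives, by induction on j, that a T-predecessor x of j is
   T-below every i in [x, j).  Hence every cofinal branch of T|L equals
   b = {x in L | x <=_T j for all j in L above x}, and when L = [0, l) with l in
   lh(T) the branch [0, l)_T is of this form.  For existence, b is linear and
   downward closed.  It has no largest element a: by finite branching, for large
   enough J in L every immediate T-successor of a outside b is not T-below J,
   yet a <_T J passes through one of them.  And b is not bounded in L: its
   supremum g is a limit, so by the closure of [0, j)_T at limits g is T-below
   every larger j in L, putting g in b. *)
From Stdlib Require Import List Classical.

Set Implicit Arguments.

Section WellOrder.

Variable O : Type.
Variable lt : O -> O -> Prop.
Hypothesis Hwo : is_wellorder lt.

Lemma lt_irrefl x : ~ lt x x.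
Proof. apply Hwo. Qed.

Lemma lt_trans x y z : lt x y -> lt y z -> lt x z.
Proof. apply Hwo. Qed.

Lemma lt_total x y : lt x y \/ x = y \/ lt y x.
Proof. apply Hwo. Qed.

Lemma lt_wf : well_founded lt.
Proof. apply Hwo. Qed.

Lemma le_refl x : le lt x x.
Proof. right; reflexivity. Qed.

Lemma le_lt_trans x y z : le lt x y -> lt y z -> lt x z.
Proof. intros [Hxy | ->] Hyz; [exact (lt_trans Hxy Hyz) | exact Hyz]. Qed.

Lemma lt_le_trans x y z : lt x y -> le lt y z -> lt x z.
Proof. intros Hxy [Hyz | <-]; [exact (lt_trans Hxy Hyz) | exact Hxy]. Qed.

Lemma le_trans x y z : le lt x y -> le lt y z -> le lt x z.
Proof. intros [Hxy | ->] Hyz; [left; exact (lt_le_trans Hxy Hyz) | exact Hyz]. Qed.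

Lemma lt_not_le x y : lt x y -> ~ le lt y x.
Proof. intros Hxy Hyx. exact (lt_irrefl (lt_le_trans Hxy Hyx)). Qed.

Lemma not_lt_le x y : ~ lt x y -> le lt y x.
Proof.
  intro Hxy. destruct (lt_total x y) as [? | [-> | ?]];
    [contradiction | apply le_refl | left; assumption].
Qed.

Lemma ex_minimal (P : O -> Prop) (x : O) : P x -> exists m, P m /\ forall y, P y -> ~ lt y m.
Proof.
  intro Px. apply NNPP. intro Hno.
  assert (Hnone : forall y, ~ P y).
  { intro y. induction y as [y IH] using (well_founded_ind lt_wf).
    intro Py. apply Hno. exists y. split; [exact Py |]. intros w Pw Hwy. exact (IH w Hwy Pw). }
  exact (Hnone x Px).
Qed.

Lemma ordinal_cases j : is_min lt j \/ (exists a, is_succ lt a j) \/ is_limit lt j.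
Proof.
  destruct (classic (exists x, lt x j)) as [Hnz | Hz].
  - destruct (classic (forall x, lt x j -> exists y, lt x y /\ lt y j)) as [Hlim | Hsucc].
    + right; right. split; assumption.
    + right; left. apply not_all_ex_not in Hsucc. destruct Hsucc as [a Ha].
      exists a. split; [apply NNPP; intro Haj; apply Ha; intro; contradiction |].
      intros x Hax. apply not_lt_le. intro Hxj. apply Ha. intros _. exists x; split; assumption.
  - left. intro x. apply not_lt_le. intro Hxj. apply Hz. exists x. exact Hxj.
Qed.

Lemma succ_le a j i : is_succ lt a j -> lt i j -> le lt i a.
Proof. intros [_ Ha] Hij. apply not_lt_le. intro Hai. exact (lt_not_le Hij (Ha i Hai)). Qed.

Lemma ex_least_strict_upper_bound (B : O -> Prop) x :
  (forall y, B y -> lt y x) ->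
  exists g, (forall y, B y -> lt y g) /\ le lt g x /\
            forall w, lt w g -> exists y, B y /\ le lt w y.
Proof.
  intro Hx. destruct (ex_minimal (fun z => forall y, B y -> lt y z) x Hx) as [g [Hg Hgmin]].
  exists g. split; [exact Hg |]. split.
  - apply not_lt_le. intro Hxg. exact (Hgmin x Hx Hxg).
  - intros w Hw. apply NNPP. intro Hno. apply (Hgmin w); [| exact Hw].
    intros y Hy. apply NNPP. intro Hyw. apply Hno. exists y. split; [exact Hy | exact (not_lt_le Hyw)].
Qed.

Lemma limit_segment_is_limit (L : O -> Prop) l :
  limit_segment lt L -> (forall x, L x <-> lt x l) -> is_limit lt l.
Proof.
  intros [_ [[x0 Hx0] Hnomax]] HLl. split.
  - exists x0. apply HLl. exact Hx0.
  - intros x Hx. destruct (Hnomax x (proj2 (HLl x) Hx)) as [y [Hy Hxy]].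
    exists y. split; [exact Hxy | apply HLl; exact Hy].
Qed.

Definition eventually (L P : O -> Prop) : Prop :=
  exists j, L j /\ forall J, L J -> le lt j J -> P J.

Lemma eventually_and L P Q :
  eventually L P -> eventually L Q -> eventually L (fun J => P J /\ Q J).
Proof.
  intros [j1 [Hj1 HP]] [j2 [Hj2 HQ]].
  destruct (lt_total j1 j2) as [H12 | [<- | H21]].
  - exists j2. split; [exact Hj2 |]. intros J HJ Hj2J.
    split; [apply HP; [exact HJ | left; exact (lt_le_trans H12 Hj2J)] | exact (HQ J HJ Hj2J)].
  - exists j1. split; [exact Hj1 |]. intros J HJ HjJ. split; [exact (HP J HJ HjJ) | exact (HQ J HJ HjJ)].
  - exists j1. split; [exact Hj1 |]. intros J HJ Hj1J.
    split; [exact (HP J HJ Hj1J) | apply HQ; [exact HJ | left; exact (lt_le_trans H21 Hj1J)]].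
Qed.

Lemma eventually_forall_in L (P : O -> O -> Prop) (s : list O) :
  (exists x, L x) -> (forall c, In c s -> eventually L (P c)) ->
  eventually L (fun J => forall c, In c s -> P c J).
Proof.
  intros [x0 Hx0]. induction s as [| c s IH]; intro Hs.
  - exists x0. split; [exact Hx0 |]. intros J _ _ c [].
  - destruct (eventually_and (Hs c (or_introl eq_refl)) (IH (fun c' Hc' => Hs c' (or_intror Hc'))))
      as [j [Hj Hev]].
    exists j. split; [exact Hj |]. intros J HJ HjJ c' [<- | Hc'];
      [exact (proj1 (Hev J HJ HjJ)) | exact (proj2 (Hev J HJ HjJ) c' Hc')].
Qed.

Lemma eventually_gt L a : limit_segment lt L -> L a -> eventually L (lt a).
Proof.
  intros [_ [_ Hnomax]] Ha. destruct (Hnomax a Ha) as [y [Hy Hay]].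
  exists y. split; [exact Hy |]. intros J _ HyJ. exact (lt_le_trans Hay HyJ).
Qed.

Section IterationTree.

Variable T : O -> O -> Prop.
Variable lh : O -> Prop.
Hypothesis HT : iteration_tree_order lt T lh.

Lemma lh_downward a b : lt a b -> lh b -> lh a.
Proof. apply HT. Qed.

Lemma T_lh a b : T a b -> lh a /\ lh b.
Proof. apply HT. Qed.

Lemma T_lt a b : T a b -> lt a b.
Proof. apply HT. Qed.

Lemma T_trans a b c : T a b -> T b c -> T a c.
Proof. apply HT. Qed.

Lemma T_linear a c b : T a b -> T c b -> a = c \/ T a c \/ T c a.
Proof. apply HT. Qed.

Lemma min_Tle z j : is_min lt z -> lh j -> Tle T z j.
Proof.
  intros Hz Hj. destruct (classic (j = z)) as [-> | Hjz]; [right; reflexivity |].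
  destruct HT as (_ & _ & _ & _ & _ & Hroot & _).
  left. exact (Hroot z j Hz Hj Hjz).
Qed.

Lemma succ_has_Tpred a b : is_succ lt a b -> lh b -> exists p, Tpred T p b.
Proof. apply HT. Qed.

Lemma limit_T_cofinal l x : is_limit lt l -> lh l -> lt x l -> exists y, lt x y /\ T y l.
Proof. intros Hl Hlh. apply HT; assumption. Qed.

Lemma limit_T_closed l g : is_limit lt l -> lh l -> lt g l -> is_limit lt g ->
  (forall x, lt x g -> exists y, lt x y /\ lt y g /\ T y l) -> T g l.
Proof. intros Hl Hlh. apply HT; assumption. Qed.

Lemma Tle_trans x y z : Tle T x y -> Tle T y z -> Tle T x z.
Proof.
  intros [Hxy | ->] [Hyz | <-]; [left; exact (T_trans Hxy Hyz) | left | left | right]; auto.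
Qed.

Lemma Tle_le x y : Tle T x y -> le lt x y.
Proof. intros [Hxy | ->]; [left; exact (T_lt Hxy) | apply le_refl]. Qed.

Lemma ex_Tpred_Tle a J : T a J -> exists c, Tpred T a c /\ Tle T c J.
Proof.
  intro HaJ.
  destruct (ex_minimal (fun c => T a c /\ Tle T c J) J (conj HaJ (or_intror eq_refl)))
    as [c [[Hac HcJ] Hcmin]].
  exists c. split; [| exact HcJ]. split; [exact Hac |]. intros w Hwc.
  assert (HwJ : T w J) by (destruct HcJ as [HcJ | <-]; [exact (T_trans Hwc HcJ) | exact Hwc]).
  destruct (T_linear HwJ HaJ) as [-> | [Hwa | Haw]]; [right; reflexivity | left; exact Hwa |].
  exfalso. exact (Hcmin w (conj Haw (or_introl HwJ)) (T_lt Hwc)).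
Qed.

(* The closure of [0, j)_T at limits, propagated through successor steps. *)
Lemma Tle_sup (B : O -> Prop) g :
  (exists y, B y) ->
  (forall y, B y -> lt y g) ->
  (forall w, lt w g -> exists y, B y /\ lt w y) ->
  forall j, lh j -> le lt g j -> (forall y, B y -> T y j) -> Tle T g j.
Proof.
  intros [y0 Hy0] Hub Hcof.
  assert (Hglim : is_limit lt g).
  { split; [exists y0; exact (Hub y0 Hy0) |].
    intros w Hw. destruct (Hcof w Hw) as [y [Hy Hwy]]. exists y. split; [exact Hwy | exact (Hub y Hy)]. }
  intro j. induction j as [j IH] using (well_founded_ind lt_wf).
  intros Hj [Hgj | <-] HBj; [| right; reflexivity].
  destruct (ordinal_cases j) as [Hmin | [[a Ha] | Hlim]].
  - exfalso. exact (lt_not_le Hgj (Hmin g)).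
  - destruct (succ_has_Tpred Ha Hj) as [p [Hpj Hp]].
    assert (HBp : forall y, B y -> T y p).
    { intros y Hy. destruct (Hp y (HBj y Hy)) as [Hyp | ->]; [exact Hyp |].
      exfalso. destruct (Hcof p (Hub p Hy)) as [y' [Hy' Hpy']].
      exact (lt_not_le Hpy' (Tle_le (Hp y' (HBj y' Hy')))). }
    assert (Hgp : le lt g p).
    { apply not_lt_le. intro Hpg. destruct (Hcof p Hpg) as [y [Hy Hpy]].
      exact (lt_irrefl (lt_trans Hpy (T_lt (HBp y Hy)))). }
    destruct (IH p (T_lt Hpj) (proj1 (T_lh Hpj)) Hgp HBp) as [Hgp' | <-];
      left; [exact (T_trans Hgp' Hpj) | exact Hpj].
  - left. apply (limit_T_closed Hlim Hj Hgj Hglim).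
    intros w Hw. destruct (Hcof w Hw) as [y [Hy Hwy]].
    exists y. split; [exact Hwy |]. split; [exact (Hub y Hy) | exact (HBj y Hy)].
Qed.

Hypothesis Hal : almost_linear lt T lh.

Lemma Tle_between j x i : lh j -> le lt x i -> lt i j -> Tle T x j -> Tle T x i.
Proof.
  revert x i. induction j as [j IH] using (well_founded_ind lt_wf).
  intros x i Hj Hxi Hij [Hxj | <-]; [| exfalso; exact (lt_not_le Hij Hxi)].
  destruct (ordinal_cases j) as [Hmin | [[a Ha] | Hlim]].
  - exfalso. exact (lt_not_le Hij (Hmin i)).
  - destruct (succ_has_Tpred Ha Hj) as [p Hp].
    assert (Hxa : Tle T x a) by exact (Tle_trans (proj2 Hp x Hxj) (proj1 Hal a j p Ha Hj Hp)).
    destruct (succ_le Ha Hij) as [Hia | ->]; [| exact Hxa].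
    exact (IH a (proj1 Ha) x i (lh_downward (proj1 Ha) Hj) Hxi Hia Hxa).
  - destruct (limit_T_cofinal Hlim Hj Hij) as [y [Hiy Hyj]].
    destruct (T_linear Hxj Hyj) as [<- | [Hxy | Hyx]].
    + exfalso. exact (lt_not_le Hiy Hxi).
    + exact (IH y (T_lt Hyj) x i (proj1 (T_lh Hyj)) Hxi Hiy (or_introl Hxy)).
    + exfalso. exact (lt_not_le (T_lt Hyx) (le_trans Hxi (or_introl Hiy))).
Qed.

Section LimitSegment.

Variable L : O -> Prop.
Hypothesis HL : limit_segment lt L.
Hypothesis HLlh : forall x, L x -> lh x.

Definition limit_branch (x : O) : Prop := L x /\ forall j, L j -> le lt x j -> Tle T x j.

Lemma cofinal_branch_limit_branch c :
  cofinal_branch lt T L c -> forall x, c x <-> limit_branch x.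
Proof.
  intros [HcL [Hclin [Hcdown Hcof]]] x. split.
  - intro Hx. split; [exact (HcL x Hx) |]. intros j Hj Hxj.
    destruct (Hcof j Hj) as [y [Hy Hjy]].
    assert (Hxy : Tle T x y).
    { destruct (Hclin x y Hx Hy) as [-> | [Hxy | Hyx]]; [right; reflexivity | left; exact Hxy |].
      exfalso. exact (lt_not_le (T_lt Hyx) (le_trans Hxj Hjy)). }
    destruct Hjy as [Hjy | <-]; [| exact Hxy].
    exact (Tle_between (HLlh (HcL y Hy)) Hxj Hjy Hxy).
  - intros [Hx Hxb]. destruct (Hcof x Hx) as [y [Hy Hxy]].
    destruct (Hxb y (HcL y Hy) Hxy) as [HxTy | ->]; [exact (Hcdown x y Hy HxTy) | exact Hy].
Qed.

Lemma limit_branch_nonempty : exists z, limit_branch z.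
Proof.
  destruct HL as [_ [[x0 Hx0] _]].
  destruct (ex_minimal (fun _ => True) x0 I) as [z [_ Hzmin]].
  assert (Hz : is_min lt z) by (intro x; apply not_lt_le; exact (Hzmin x I)).
  exists z. split.
  - destruct (Hz x0) as [Hzx0 | ->]; [exact (proj1 HL z x0 Hzx0 Hx0) | exact Hx0].
  - intros j Hj _. exact (min_Tle Hz (HLlh Hj)).
Qed.

Lemma limit_branch_linear x y :
  limit_branch x -> limit_branch y -> x = y \/ T x y \/ T y x.
Proof.
  intros [Hx Hxb] [Hy Hyb].
  destruct (lt_total x y) as [Hxy | [-> | Hyx]]; [| left; reflexivity |].
  - destruct (Hxb y Hy (or_introl Hxy)) as [HxTy | ->]; [right; left; exact HxTy | left; reflexivity].
  - destruct (Hyb x Hx (or_introl Hyx)) as [HyTx | ->]; [right; right; exact HyTx | left; reflexivity].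
Qed.

Lemma limit_branch_downward x y : limit_branch y -> T x y -> limit_branch x.
Proof.
  intros [Hy Hyb] Hxy. split; [exact (proj1 HL x y (T_lt Hxy) Hy) |].
  intros j Hj Hxj. destruct (lt_total j y) as [Hjy | [-> | Hyj]].
  - exact (Tle_between (HLlh Hy) Hxj Hjy (or_introl Hxy)).
  - left. exact Hxy.
  - exact (Tle_trans (or_introl Hxy) (Hyb j Hj (or_introl Hyj))).
Qed.

Lemma not_limit_branch_eventually c :
  L c -> ~ limit_branch c -> eventually L (fun J => ~ Tle T c J).
Proof.
  intros Hc Hnc. apply NNPP. intro Hno. apply Hnc. split; [exact Hc |].
  intros j Hj Hcj. apply NNPP. intro Hncj. apply Hno. exists j. split; [exact Hj |].
  intros J HJ [HjJ | <-] HcJ; [| exact (Hncj HcJ)].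
  exact (Hncj (Tle_between (HLlh HJ) Hcj HjJ HcJ)).
Qed.

Lemma limit_branch_no_max a : limit_branch a -> exists y, limit_branch y /\ lt a y.
Proof.
  intro Ha. apply NNPP. intro Hmax.
  destruct (proj2 Hal a (HLlh (proj1 Ha))) as [s Hs].
  assert (Hev : eventually L (fun J => lt a J /\
            forall c, In c s -> L c -> ~ limit_branch c -> ~ Tle T c J)).
  { apply eventually_and; [exact (eventually_gt a HL (proj1 Ha)) |].
    apply eventually_forall_in; [exact (proj1 (proj2 HL)) |]. intros c _.
    destruct (classic (L c /\ ~ limit_branch c)) as [[Hc Hnc] | Hc].
    - destruct (not_limit_branch_eventually Hc Hnc) as [j [Hj Hev]].
      exists j. split; [exact Hj |]. intros J HJ HjJ _ _. exact (Hev J HJ HjJ).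
    - exists a. split; [exact (proj1 Ha) |]. intros J _ _ Hc' Hnc'. exfalso. exact (Hc (conj Hc' Hnc')). }
  destruct Hev as [J [HJ Hev]]. destruct (Hev J HJ (le_refl J)) as [HaJ HsJ].
  assert (HaTJ : T a J).
  { destruct (proj2 Ha J HJ (or_introl HaJ)) as [HaTJ | ->]; [exact HaTJ | exfalso; exact (lt_irrefl HaJ)]. }
  destruct (ex_Tpred_Tle HaTJ) as [c [Hac HcJ]].
  assert (HLc : L c).
  { destruct HcJ as [HcJ | ->]; [exact (proj1 HL c J (T_lt HcJ) HJ) | exact HJ]. }
  apply (HsJ c (Hs c Hac) HLc); [| exact HcJ].
  intro Hc. apply Hmax. exists c. split; [exact Hc | exact (T_lt (proj1 Hac))].
Qed.

Lemma limit_branch_unbounded x : L x -> exists y, limit_branch y /\ le lt x y.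
Proof.
  intro Hx. apply NNPP. intro Hno.
  assert (Hub : forall y, limit_branch y -> lt y x).
  { intros y Hy. apply NNPP. intro Hyx. apply Hno. exists y. split; [exact Hy | exact (not_lt_le Hyx)]. }
  destruct (ex_least_strict_upper_bound limit_branch Hub) as [g [Hgub [Hgx Hgcof]]].
  assert (Hcof : forall w, lt w g -> exists y, limit_branch y /\ lt w y).
  { intros w Hw. destruct (Hgcof w Hw) as [y [Hy Hwy]].
    destruct (limit_branch_no_max Hy) as [y' [Hy' Hyy']].
    exists y'. split; [exact Hy' | exact (le_lt_trans Hwy Hyy')]. }
  assert (HLg : L g).
  { destruct Hgx as [Hgx | ->]; [exact (proj1 HL g x Hgx Hx) | exact Hx]. }
  assert (Hg : limit_branch g).
  { split; [exact HLg |]. intros j Hj Hgj.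
    apply (Tle_sup limit_branch limit_branch_nonempty Hgub Hcof (HLlh Hj) Hgj).
    intros y Hy. destruct (proj2 Hy j Hj (or_introl (lt_le_trans (Hgub y Hy) Hgj))) as [Hyj | ->];
      [exact Hyj | exfalso; exact (lt_not_le (Hgub j Hy) Hgj)]. }
  exact (lt_irrefl (Hgub g Hg)).
Qed.

Lemma limit_branch_cofinal_branch : cofinal_branch lt T L limit_branch.
Proof.
  split; [intros x Hx; exact (proj1 Hx) |].
  split; [exact limit_branch_linear |].
  split; [intros x y Hy Hxy; exact (limit_branch_downward Hy Hxy) |].
  exact limit_branch_unbounded.
Qed.

Lemma limit_branch_iff_T l :
  lh l -> (forall x, L x <-> lt x l) -> forall x, limit_branch x <-> T x l.
Proof.
  intros Hl HLl x. pose proof (limit_segment_is_limit HL HLl) as Hlim. split.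
  - intros [Hx Hxb]. destruct (limit_T_cofinal Hlim Hl (proj1 (HLl x) Hx)) as [y [Hxy Hyl]].
    destruct (Hxb y (proj2 (HLl y) (T_lt Hyl)) (or_introl Hxy)) as [HxTy | ->];
      [exact (T_trans HxTy Hyl) | exact Hyl].
  - intro Hxl. split; [exact (proj2 (HLl x) (T_lt Hxl)) |]. intros j Hj Hxj.
    exact (Tle_between Hl Hxj (proj1 (HLl j) Hj) (or_introl Hxl)).
Qed.

End LimitSegment.

End IterationTree.

End WellOrder.

Theorem lemma2p2 (O : Type) (lt : O -> O -> Prop) (Hwo : is_wellorder lt)
  (T : O -> O -> Prop) (lh : O -> Prop)
  (HT : iteration_tree_order lt T lh) (Hal : almost_linear lt T lh)
  (L : O -> Prop) (HL : limit_segment lt L) (HLlh : forall x, L x -> lh x) :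
  (exists b, cofinal_branch lt T L b /\
     forall c, cofinal_branch lt T L c -> forall x, c x <-> b x) /\
  (forall l, lh l -> (forall x, L x <-> lt x l) ->
     forall b, cofinal_branch lt T L b -> forall x, b x <-> T x l).
Proof.
  split.
  - exists (limit_branch lt T L). split.
    + exact (limit_branch_cofinal_branch Hwo HT Hal HL HLlh).
    + exact (cofinal_branch_limit_branch Hwo HT Hal HLlh).
  - intros l Hl HLl b Hb x.
    rewrite (cofinal_branch_limit_branch Hwo HT Hal HLlh Hb x).
    exact (limit_branch_iff_T Hwo HT Hal HL l Hl HLl x).
Qed.
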